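(* For any $i\in\{0,\dots,m-1\}$ such that $B_i\le\kappa B_{i+1}$, at least one of the following holds: (i) $\{\operatorname{pr}(b_1),\dots,\operatorname{pr}(b_i)\}$ is a basis of $\Lambda$; (ii) $\Lambda$ is not generated by elements of norm $\le\kappa B_{i+1}$; (iii) $\varphi(\beta)\le B_i$.
   Context: Let $m\ge2$ and $1\le p\le m$ be integers and $P\in\mathbb{R}^{m\times p}$. Vectors of $\mathbb{Z}^m$, $\mathbb{R}^m$ are row vectors and all norms $\|\cdot\|$ are Euclidean. Let $\Lambda=\{x\in\mathbb{Z}^m : xP=0\}$. For $B\ge0$ let $\varepsilon(B)=\min\{\|uP\| : u\in\mathbb{Z}^m,\ \|u\|\le B,\ uP\neq0\}$ (with $\varepsilon(B)=+\infty$ if this set is empty), and for $s\ge0$ let $\varphi(s)=\sup\{B\ge0 : mB/\varepsilon(B)\le s\}\in[0,+\infty]$, with the convention $mB/(+\infty)=0$. Let $\beta>0$ and let $P_\beta\in\mathbb{Z}^{m\times p}$ be such that every entry of $P_\beta-\beta P$ lies in $[-\tfrac12,\tfrac12]$. Let $R\subset\mathbb{Z}^{p+m}$ be the lattice spanned by the rows of the $m\times(p+m)$ matrix $[\,P_\beta\mid I_m\,]$, and let $b_1,\dots,b_m$ be a basis of $R$ that is LLL-reduced (Lenstra–Lenstra–Lovász, with parameter $3/4$) and satisfies $\|b_1\|\le\dots\le\|b_m\|$. Set $B_0=0$, $B_i=\|b_i\|$ for $1\le i\le m$, $\kappa=m^{-1}2^{-(m+1)/2}$, and let $\operatorname{pr}\colon\mathbb{Z}^{p+m}\to\mathbb{Z}^m$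 be the projection onto the last $m$ coordinates. *)

From Stdlib Require Import Reals Lra Lia ZArith List ClassicalEpsilon.
Open Scope R_scope.

(* Vectors of Z^d / R^d are represented as functions nat -> Z / nat -> R;
   only the coordinates 0..d-1 are meaningful (all definitions below only
   look at those coordinates). Matrices are nat -> nat -> _ (row, column). *)

Fixpoint sumR (n : nat) (f : nat -> R) : R :=
  match n with O => 0 | S k => sumR k f + f k end.
Fixpoint sumZ (n : nat) (f : nat -> Z) : Z :=
  match n with O => 0%Z | S k => (sumZ k f + f k)%Z end.

Definition normR (d : nat) (x : nat -> R) : R := sqrt (sumR d (fun t => x t ^ 2)).
Definition toR (x : nat -> Z) : nat -> R := fun t => IZR (x t).
Definition normZ (d : nat) (x : nat -> Z) : R := normR d (toR x).
Definition dotR (d : nat) (x y : nat -> R) : R := sumR d (fun t => x t * y t).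

Definition vecmat (m : nat) (P : nat -> nat -> R) (u : nat -> Z) : nat -> R :=
  fun j => sumR m (fun k => IZR (u k) * P k j).

Definition Lambda (m p : nat) (P : nat -> nat -> R) (x : nat -> Z) : Prop :=
  forall j, (j < p)%nat -> vecmat m P x j = 0.

Definition is_Zbasis (n d : nat) (v : nat -> nat -> Z) (L : (nat -> Z) -> Prop) : Prop :=
  (forall k, (k < n)%nat -> L (v k)) /\
  (forall c : nat -> Z,
      (forall t, (t < d)%nat -> sumZ n (fun k => (c k * v k t)%Z) = 0%Z) ->
      forall k, (k < n)%nat -> c k = 0%Z) /\
  (forall x, L x -> exists c : nat -> Z,
      forall t, (t < d)%nat -> x t = sumZ n (fun k => (c k * v k t)%Z)).

Definition generated_by_norm_le (d : nat) (L : (nat -> Z) -> Prop) (r : R) : Prop :=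
  forall x, L x -> exists (n : nat) (v : nat -> nat -> Z) (a : nat -> Z),
    (forall k, (k < n)%nat -> L (v k) /\ normZ d (v k) <= r) /\
    (forall t, (t < d)%nat -> x t = sumZ n (fun k => (a k * v k t)%Z)).

(* epsilon(B) as an element of [0,+oo], None standing for +oo:
   the minimum of ||uP|| over u in Z^m, ||u|| <= B, uP <> 0. *)
Definition eps_set (m p : nat) (P : nat -> nat -> R) (B : R) (e : R) : Prop :=
  exists u : nat -> Z, normZ m u <= B /\
    (exists j, (j < p)%nat /\ vecmat m P u j <> 0) /\
    e = normR p (vecmat m P u).

Definition eps (m p : nat) (P : nat -> nat -> R) (B : R) : option R :=
  epsilon (inhabits None) (fun o : option R =>
    match o with
    | None => forall e, ~ eps_set m p P B e
    | Some x => eps_set m p P B x /\ forall e, eps_set m p P B e -> x <= e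
    end).

(* the set { B >= 0 : m B / eps(B) <= s }, with m B / (+oo) = 0 *)
Definition phi_set (m p : nat) (P : nat -> nat -> R) (s B : R) : Prop :=
  0 <= B /\
  match eps m p P B with
  | None => 0 <= s
  | Some e => INR m * B / e <= s
  end.

(* phi(s) = sup of phi_set in [0,+oo] (None = +oo); taking the sup of
   phi_set together with 0 realises the convention sup of empty = 0 in [0,+oo]. *)
Definition phi (m p : nat) (P : nat -> nat -> R) (s : R) : option R :=
  epsilon (inhabits None) (fun o : option R =>
    match o with
    | None => ~ bound (fun B => B = 0 \/ phi_set m p P s B)
    | Some x => is_lub (fun B => B = 0 \/ phi_set m p P s B) x
    end).

(* The rows of [ Pb | I_m ], vectors in Z^(p+m) *)
Definition aug_row (p : nat) (Pb : nat -> nat -> Z) (k : nat) : nat -> Z :=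
  fun t => if (t <? p)%nat then Pb k t else (if Nat.eqb (t - p) k then 1%Z else 0%Z).

Definition in_R (m p : nat) (Pb : nat -> nat -> Z) (x : nat -> Z) : Prop :=
  exists c : nat -> Z, forall t, (t < p + m)%nat ->
    x t = sumZ m (fun k => (c k * aug_row p Pb k t)%Z).

Definition pr (p : nat) (x : nat -> Z) : nat -> Z := fun t => x (p + t)%nat.

Definition vsub (x y : nat -> R) : nat -> R := fun t => x t - y t.
Definition vscale (a : R) (x : nat -> R) : nat -> R := fun t => a * x t.
Definition vzero : nat -> R := fun _ => 0.

Fixpoint gs_list (d : nat) (v : nat -> nat -> R) (n : nat) : list (nat -> R) :=
  match n with
  | O => nil
  | S k => let l := gs_list d v k in
           l ++ (fold_left (fun acc w => vsub acc (vscale (dotR d (v k) w / dotR d w w) w))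
                           l (v k)) :: nil
  end.

Definition gs (d : nat) (v : nat -> nat -> R) (k : nat) : nat -> R :=
  nth k (gs_list d v (S k)) vzero.

Definition gs_mu (d : nat) (v : nat -> nat -> R) (k j : nat) : R :=
  dotR d (v k) (gs d v j) / dotR d (gs d v j) (gs d v j).

Definition LLL_reduced (n d : nat) (v : nat -> nat -> R) : Prop :=
  (forall k j, (j < k)%nat -> (k < n)%nat -> Rabs (gs_mu d v k j) <= 1/2) /\
  (forall k, (1 <= k)%nat -> (k < n)%nat ->
     3/4 * (normR d (gs d v (k - 1)) ^ 2) <=
     normR d (fun t => gs d v k t + gs_mu d v k (k - 1) * gs d v (k - 1) t) ^ 2).

Definition kappa (m : nat) : R := / INR m * Rpower 2 (- (INR m + 1) / 2).

(* Suppose some B > B_i has m B / eps(B) <= beta.  A vector x of R has first p coordinates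
   (pr x) P_beta = beta (pr x) P + (rounding error of norm <= m |pr x| / 2), so
   beta |(pr x) P| <= m |x| / sqrt 2; if |x| <= B_i and (pr x) P <> 0 this contradicts
   m B <= beta eps(B) <= beta |(pr x) P|.  Hence pr(b_1), ..., pr(b_i) lie in Lambda, and they are
   independent because a vector of R is determined by its projection.  A vector v of Lambda with
   |v| <= kappa B_{i+1} lifts to a vector w of R with |w|^2 <= (m^2/4 + 1) |v|^2; if w had a nonzero
   coordinate on some b_k with k > i, the LLL bound |b_k|^2 <= 3/2 2^(m-1) |w|^2 would contradict
   the choice of kappa.  So if Lambda is generated by such vectors, (i) holds.  If no such B exists,
   B_i bounds the set defining phi(beta), which is (iii). *)

From Stdlib Require Import Reals Lra Lia ZArith List ClassicalEpsilon Classical FinFun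
  FunctionalExtensionality.
Open Scope R_scope.

Lemma sumR_ext n f g : (forall t, (t < n)%nat -> f t = g t) -> sumR n f = sumR n g.
Proof. induction n; simpl; intros H; auto. rewrite IHn, H by (intros; try apply H; lia). auto. Qed.

Lemma sumR_add n f g : sumR n (fun t => f t + g t) = sumR n f + sumR n g.
Proof. induction n; simpl; [lra|]. rewrite IHn; lra. Qed.

Lemma sumR_scal n c f : sumR n (fun t => c * f t) = c * sumR n f.
Proof. induction n; simpl; [lra|]. rewrite IHn; lra. Qed.

Lemma sumR_const n c : sumR n (fun _ => c) = INR n * c.
Proof. induction n; simpl sumR; [simpl; lra|]. rewrite IHn, S_INR; lra. Qed.

Lemma sumR_0 n : sumR n (fun _ => 0) = 0.
Proof. rewrite sumR_const; ring. Qed.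

Lemma sumR_sub n f g : sumR n (fun t => f t - g t) = sumR n f - sumR n g.
Proof. induction n; simpl; [lra|]. rewrite IHn; lra. Qed.

Lemma sumR_swap n k F :
  sumR n (fun a => sumR k (fun c => F a c)) = sumR k (fun c => sumR n (fun a => F a c)).
Proof.
  induction n; simpl.
  - symmetry; apply sumR_0.
  - rewrite IHn, <- sumR_add; reflexivity.
Qed.

Lemma sumR_delta n j f :
  (j < n)%nat -> (forall t, (t < n)%nat -> t <> j -> f t = 0) -> sumR n f = f j.
Proof.
  induction n; intros Hj H; [lia|]. simpl. destruct (Nat.eq_dec j n) as [->|Hne].
  - rewrite (sumR_ext n f (fun _ => 0)), sumR_0 by (intros; apply H; lia). ring.
  - rewrite IHn, (H n) by (try lia; intros; apply H; lia). ring.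
Qed.

Lemma sumR_le n f g : (forall t, (t < n)%nat -> f t <= g t) -> sumR n f <= sumR n g.
Proof.
  induction n; simpl; intros H; [lra|].
  pose proof (IHn ltac:(intros; apply H; lia)). pose proof (H n ltac:(lia)). lra.
Qed.

Lemma sumR_nonneg n f : (forall t, (t < n)%nat -> 0 <= f t) -> 0 <= sumR n f.
Proof. intros H. rewrite <- (sumR_0 n). now apply sumR_le. Qed.

Lemma sumR_eq0_nonneg n f :
  (forall t, (t < n)%nat -> 0 <= f t) -> sumR n f = 0 -> forall t, (t < n)%nat -> f t = 0.
Proof.
  induction n; simpl; intros H E t Ht; [lia|].
  pose proof (sumR_nonneg n f ltac:(intros; apply H; lia)). pose proof (H n ltac:(lia)).
  destruct (Nat.eq_dec t n) as [->|Hne]; [lra|].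
  apply IHn; [intros; apply H; lia | lra | lia].
Qed.

Lemma sumR_split a c f : sumR (a + c) f = sumR a f + sumR c (fun t => f (a + t)%nat).
Proof.
  induction c; simpl; [rewrite Nat.add_0_r; ring|].
  rewrite Nat.add_succ_r. simpl. rewrite IHc. ring.
Qed.

Lemma sumR_sq_ge_term n x t : (t < n)%nat -> x t ^ 2 <= sumR n (fun s => x s ^ 2).
Proof.
  intros Ht. induction n as [|n IH]; [lia|]. cbn [sumR].
  pose proof (pow2_ge_0 (x n)).
  pose proof (sumR_nonneg n (fun s => x s ^ 2) ltac:(intros; apply pow2_ge_0)).
  destruct (Nat.eq_dec t n) as [->|Hne]; [lra|].
  pose proof (IH ltac:(lia)). lra.
Qed.

Lemma sumZ_ext n f g : (forall t, (t < n)%nat -> f t = g t) -> sumZ n f = sumZ n g.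
Proof. induction n; simpl; intros H; auto. rewrite IHn, H by (intros; try apply H; lia). auto. Qed.

Lemma sumZ_add n f g : sumZ n (fun t => f t + g t)%Z = (sumZ n f + sumZ n g)%Z.
Proof. induction n; simpl; [lia|]. rewrite IHn; lia. Qed.

Lemma sumZ_scal n c f : sumZ n (fun t => c * f t)%Z = (c * sumZ n f)%Z.
Proof. induction n; simpl; [lia|]. rewrite IHn; lia. Qed.

Lemma sumZ_eq0 n f : (forall t, (t < n)%nat -> f t = 0%Z) -> sumZ n f = 0%Z.
Proof. induction n; simpl; intros H; auto. rewrite IHn, H by (intros; try apply H; lia). lia. Qed.

Lemma sumZ_delta n j f :
  (j < n)%nat -> (forall t, (t < n)%nat -> t <> j -> f t = 0%Z) -> sumZ n f = f j.
Proof.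
  induction n; intros Hj H; [lia|]. simpl. destruct (Nat.eq_dec j n) as [->|Hne].
  - rewrite sumZ_eq0 by (intros; apply H; lia). lia.
  - rewrite IHn, (H n) by (try lia; intros; apply H; lia). lia.
Qed.

Lemma sumZ_trunc n i f :
  (i <= n)%nat -> (forall t, (i <= t < n)%nat -> f t = 0%Z) -> sumZ n f = sumZ i f.
Proof.
  induction n; intros Hi H; [now replace i with 0%nat by lia|].
  destruct (Nat.eq_dec i (S n)) as [->|Hne]; [reflexivity|].
  simpl. rewrite IHn, (H n) by (try lia; intros; apply H; lia). lia.
Qed.

Lemma sumZ_swap n k F :
  sumZ n (fun a => sumZ k (fun c => F a c)) = sumZ k (fun c => sumZ n (fun a => F a c)).
Proof.
  induction n; simpl.
  - symmetry; apply sumZ_eq0; reflexivity.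
  - rewrite IHn, <- sumZ_add; reflexivity.
Qed.

Lemma IZR_sumZ n f : IZR (sumZ n f) = sumR n (fun t => IZR (f t)).
Proof. induction n; simpl; auto. rewrite plus_IZR, IHn; auto. Qed.

Lemma normR_sq d x : normR d x ^ 2 = sumR d (fun t => x t ^ 2).
Proof.
  unfold normR. rewrite <- Rsqr_pow2. apply Rsqr_sqrt.
  apply sumR_nonneg; intros; apply pow2_ge_0.
Qed.

Lemma normZ_sq d x : normZ d x ^ 2 = sumR d (fun t => IZR (x t) ^ 2).
Proof. apply normR_sq. Qed.

Lemma normZ_nonneg d x : 0 <= normZ d x.
Proof. apply sqrt_pos. Qed.

Lemma normR_pos d y : (exists j, (j < d)%nat /\ y j <> 0) -> 0 < normR d y.
Proof.
  intros (j & Hj & Hne). destruct (Rle_lt_or_eq_dec 0 (normR d y) (sqrt_pos _)) as [|E]; auto.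
  exfalso. assert (Hsq : normR d y ^ 2 = 0) by (rewrite <- E; ring). rewrite normR_sq in Hsq.
  pose proof (sumR_eq0_nonneg d _ ltac:(intros; apply pow2_ge_0) Hsq j Hj). apply Hne. nra.
Qed.

Lemma normZ_ext d u u' : (forall t, (t < d)%nat -> u t = u' t) -> normZ d u = normZ d u'.
Proof. intros H. unfold normZ, normR, toR. f_equal. apply sumR_ext; intros t Ht; now rewrite H. Qed.

Lemma Rabs_coord_le_normZ d u t : (t < d)%nat -> Rabs (IZR (u t)) <= normZ d u.
Proof.
  intros Ht. unfold normZ, normR. rewrite <- sqrt_Rsqr_abs. apply sqrt_le_1_alt.
  rewrite Rsqr_pow2. apply (sumR_sq_ge_term d (toR u) t Ht).
Qed.

Lemma dotR_comm d x y : dotR d x y = dotR d y x.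
Proof. apply sumR_ext; intros; ring. Qed.

Lemma dotR_self d x : dotR d x x = sumR d (fun t => x t ^ 2).
Proof. apply sumR_ext; intros; ring. Qed.

Lemma dotR_self_nonneg d x : 0 <= dotR d x x.
Proof. rewrite dotR_self. apply sumR_nonneg; intros; apply pow2_ge_0. Qed.

Lemma dotR_toR_self d x : dotR d (toR x) (toR x) = normZ d x ^ 2.
Proof. rewrite dotR_self, normZ_sq. reflexivity. Qed.

Lemma dotR_ext d x a c : (forall t, (t < d)%nat -> a t = c t) -> dotR d x a = dotR d x c.
Proof. intros H; apply sumR_ext; intros; now rewrite H. Qed.

Lemma dotR_add_r d x a c : dotR d x (fun t => a t + c t) = dotR d x a + dotR d x c.
Proof. unfold dotR. rewrite <- sumR_add. apply sumR_ext; intros; ring. Qed.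

Lemma dotR_sub_r d x a c : dotR d x (fun t => a t - c t) = dotR d x a - dotR d x c.
Proof. unfold dotR. rewrite <- sumR_sub. apply sumR_ext; intros; ring. Qed.

Lemma dotR_sum_r d k x c y :
  dotR d x (fun t => sumR k (fun j => c j * y j t)) = sumR k (fun j => c j * dotR d x (y j)).
Proof.
  unfold dotR. rewrite (sumR_ext d _ (fun t => sumR k (fun j => c j * (x t * y j t)))).
  - rewrite sumR_swap. apply sumR_ext; intros. apply sumR_scal.
  - intros. rewrite <- sumR_scal. apply sumR_ext; intros; ring.
Qed.

Lemma dotR_eq0_r d x y : dotR d x x = 0 -> dotR d y x = 0.
Proof.
  intros H. rewrite dotR_self in H. unfold dotR.
  rewrite <- (sumR_0 d). apply sumR_ext; intros t Ht.
  pose proof (sumR_eq0_nonneg d _ ltac:(intros; apply pow2_ge_0) H t Ht). nra.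
Qed.

Lemma sumR_cauchy_schwarz n x y :
  sumR n (fun t => x t * y t) ^ 2 <= sumR n (fun t => x t ^ 2) * sumR n (fun t => y t ^ 2).
Proof.
  set (S := sumR n (fun t => x t * y t)). set (X := sumR n (fun t => x t ^ 2)).
  set (Y := sumR n (fun t => y t ^ 2)).
  assert (HY : 0 <= Y) by (apply sumR_nonneg; intros; apply pow2_ge_0).
  destruct (Rle_lt_or_eq_dec 0 Y HY) as [HY0|HY0].
  - (* 0 <= sum_t (Y x_t - S y_t)^2 = Y (Y X - S^2) *)
    assert (H : 0 <= sumR n (fun t => (Y * x t - S * y t) ^ 2))
      by (apply sumR_nonneg; intros; apply pow2_ge_0).
    rewrite (sumR_ext n _ (fun t => Y * Y * x t ^ 2 + (- 2 * Y * S * (x t * y t) + S * S * y t ^ 2)))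
      in H by (intros; ring).
    rewrite !sumR_add, !sumR_scal in H. fold X S Y in H. nra.
  - assert (HS : S = 0).
    { unfold S. rewrite <- (sumR_0 n). apply sumR_ext; intros t Ht.
      pose proof (sumR_eq0_nonneg n _ ltac:(intros; apply pow2_ge_0) (eq_sym HY0) t Ht). nra. }
    rewrite HS, <- HY0. lra.
Qed.

Lemma dotR_cauchy_schwarz d x y : dotR d x y ^ 2 <= dotR d x x * dotR d y y.
Proof. rewrite !dotR_self. apply sumR_cauchy_schwarz. Qed.

Section GramSchmidt.

Variables (d : nat) (v : nat -> nat -> R).

Lemma gs_list_length n : length (gs_list d v n) = n.
Proof. induction n; simpl; auto. rewrite length_app, IHn; simpl; lia. Qed.

Lemma gs_list_S n : gs_list d v (S n) = gs_list d v n ++ gs d v n :: nil.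
Proof.
  unfold gs. simpl gs_list at 2 3.
  rewrite app_nth2 by (rewrite gs_list_length; lia). rewrite gs_list_length, Nat.sub_diag.
  reflexivity.
Qed.

Lemma gs_fold k n t :
  fold_left (fun acc w => vsub acc (vscale (dotR d (v k) w / dotR d w w) w)) (gs_list d v n) (v k) t
  = v k t - sumR n (fun j => gs_mu d v k j * gs d v j t).
Proof.
  induction n; [simpl; ring|].
  rewrite gs_list_S, fold_left_app. cbn [fold_left sumR].
  unfold vsub at 1. rewrite IHn. unfold vscale, gs_mu. ring.
Qed.

Lemma gs_expand k t : v k t = gs d v k t + sumR k (fun j => gs_mu d v k j * gs d v j t).
Proof.
  enough (E : gs d v k t = v k t - sumR k (fun j => gs_mu d v k j * gs d v j t)) by (rewrite E; ring).
  rewrite <- gs_fold. unfold gs at 1. simpl gs_list.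
  rewrite app_nth2 by (rewrite gs_list_length; lia). rewrite gs_list_length, Nat.sub_diag.
  reflexivity.
Qed.

Lemma gs_mu_dot k j : gs_mu d v k j * dotR d (gs d v j) (gs d v j) = dotR d (v k) (gs d v j).
Proof.
  unfold gs_mu. destruct (Req_dec (dotR d (gs d v j) (gs d v j)) 0) as [E|E].
  - rewrite E, dotR_eq0_r by exact E. ring.
  - field; exact E.
Qed.

Lemma gs_orthogonal k j : (j < k)%nat -> dotR d (gs d v k) (gs d v j) = 0.
Proof.
  revert j. induction k as [k IH] using (well_founded_induction lt_wf). intros j Hj.
  rewrite dotR_comm, (dotR_ext d _ _ (fun t => v k t - sumR k (fun l => gs_mu d v k l * gs d v l t)))
    by (intros t _; rewrite (gs_expand k t); ring).
  rewrite dotR_sub_r, dotR_sum_r, (sumR_delta k j); [| exact Hj |].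
  - rewrite gs_mu_dot, dotR_comm. ring.
  - intros l Hl Hne. destruct (Nat.lt_ge_cases l j).
    + rewrite (IH j Hj l); [ring | lia].
    + rewrite dotR_comm, (IH l Hl j); [ring | lia].
Qed.

Lemma dotR_expand_r x l :
  dotR d x (v l) = dotR d x (gs d v l) + sumR l (fun j => gs_mu d v l j * dotR d x (gs d v j)).
Proof.
  rewrite (dotR_ext d x _ (fun t => gs d v l t + sumR l (fun j => gs_mu d v l j * gs d v j t)))
    by (intros; apply gs_expand).
  now rewrite dotR_add_r, dotR_sum_r.
Qed.

Lemma dotR_vec_gs_lt l L : (l < L)%nat -> dotR d (v l) (gs d v L) = 0.
Proof.
  intros HlL. rewrite dotR_comm, dotR_expand_r, gs_orthogonal by exact HlL.
  rewrite <- (sumR_0 l) at 2. rewrite Rplus_0_l. apply sumR_ext; intros j Hj.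
  rewrite gs_orthogonal by lia. ring.
Qed.

Lemma dotR_vec_gs_diag L : dotR d (v L) (gs d v L) = dotR d (gs d v L) (gs d v L).
Proof.
  rewrite dotR_comm, dotR_expand_r, (sumR_ext L _ (fun _ => 0)), sumR_0; [ring|].
  intros j Hj. rewrite gs_orthogonal by exact Hj. ring.
Qed.

Lemma dotR_vec_self l :
  dotR d (v l) (v l) = dotR d (gs d v l) (gs d v l)
    + sumR l (fun j => gs_mu d v l j ^ 2 * dotR d (gs d v j) (gs d v j)).
Proof.
  rewrite dotR_expand_r, dotR_vec_gs_diag. f_equal.
  apply sumR_ext; intros j _. rewrite <- gs_mu_dot. ring.
Qed.

Lemma normR_sq_gs_add k mu : (1 <= k)%nat ->
  normR d (fun t => gs d v k t + mu * gs d v (k - 1) t) ^ 2 =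
  dotR d (gs d v k) (gs d v k) + mu ^ 2 * dotR d (gs d v (k - 1)) (gs d v (k - 1)).
Proof.
  intros Hk. pose proof (gs_orthogonal k (k - 1) ltac:(lia)) as Horth.
  rewrite normR_sq. unfold dotR in *.
  rewrite (sumR_ext d _ (fun t => gs d v k t * gs d v k t + (2 * mu * (gs d v k t * gs d v (k - 1) t)
             + mu ^ 2 * (gs d v (k - 1) t * gs d v (k - 1) t)))) by (intros; ring).
  rewrite !sumR_add, !sumR_scal, Horth. ring.
Qed.

Lemma gs_sq_le_of_dot_int x L z : z <> 0%Z ->
  dotR d x (gs d v L) = IZR z * dotR d (gs d v L) (gs d v L) ->
  dotR d (gs d v L) (gs d v L) <= dotR d x x.
Proof.
  intros Hz Hdot. set (g := dotR d (gs d v L) (gs d v L)) in *.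
  pose proof (dotR_cauchy_schwarz d x (gs d v L)) as HCS. fold g in HCS. rewrite Hdot in HCS.
  assert (Hz2 : 1 <= IZR z ^ 2) by (simpl; rewrite Rmult_1_r, <- mult_IZR; apply IZR_le; nia).
  assert (Hg0 : 0 <= g) by apply dotR_self_nonneg. pose proof (dotR_self_nonneg d x).
  destruct (Rle_lt_or_eq_dec 0 g) as [Hg|<-]; [assumption| |assumption].
  assert (g * g <= dotR d x x * g) by nra. nra.
Qed.

End GramSchmidt.

Section LLLBounds.

Variables (n d : nat) (v : nat -> nat -> R).
Hypothesis Hred : LLL_reduced n d v.

Lemma LLL_gs_sq_ratio k : (1 <= k)%nat -> (k < n)%nat ->
  dotR d (gs d v (k - 1)) (gs d v (k - 1)) <= 2 * dotR d (gs d v k) (gs d v k).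
Proof.
  intros Hk Hkn. destruct Hred as [Hsize Hlovasz].
  specialize (Hlovasz k Hk Hkn). rewrite normR_sq_gs_add, normR_sq, <- dotR_self in Hlovasz by exact Hk.
  specialize (Hsize k (k - 1)%nat ltac:(lia) Hkn).
  assert (gs_mu d v k (k - 1) ^ 2 <= 1 / 4)
    by (rewrite <- pow2_abs; pose proof (Rabs_pos (gs_mu d v k (k - 1))); nra).
  pose proof (dotR_self_nonneg d (gs d v (k - 1))). pose proof (dotR_self_nonneg d (gs d v k)).
  nra.
Qed.

Lemma LLL_gs_sq_pow L j : (L < n)%nat -> (j <= L)%nat ->
  dotR d (gs d v j) (gs d v j) * 2 ^ j <= dotR d (gs d v L) (gs d v L) * 2 ^ L.
Proof.
  induction L; intros HLn Hj.
  - replace j with 0%nat by lia. lra.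
  - destruct (Nat.eq_dec j (S L)) as [->|Hne]; [lra|].
    eapply Rle_trans; [apply IHL; lia|].
    pose proof (LLL_gs_sq_ratio (S L) ltac:(lia) HLn) as H.
    replace (S L - 1)%nat with L in H by lia.
    pose proof (pow_lt 2 L ltac:(lra)). simpl. nra.
Qed.

Lemma LLL_vec_sq_bound l L : (l <= L)%nat -> (L < n)%nat ->
  dotR d (v l) (v l) <= 3 / 2 * 2 ^ L * dotR d (gs d v L) (gs d v L).
Proof.
  intros Hl HLn. rewrite dotR_vec_self.
  set (h := dotR d (gs d v L) (gs d v L) * 2 ^ L).
  assert (Hh : 0 <= h) by (apply Rmult_le_pos; [apply dotR_self_nonneg | apply pow_le; lra]).
  assert (Hg : forall j, (j <= L)%nat -> dotR d (gs d v j) (gs d v j) <= h * (/ 2) ^ j).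
  { intros j Hj. pose proof (LLL_gs_sq_pow L j HLn Hj). fold h in H.
    pose proof (pow_lt 2 j ltac:(lra)).
    rewrite pow_inv. apply (Rmult_le_reg_r (2 ^ j)); [lra|].
    rewrite Rmult_assoc, Rinv_l by lra. lra. }
  (* the terms mu^2 |v*_j|^2 with |mu| <= 1/2 sum to at most h/2 *)
  assert (Htail : sumR l (fun j => gs_mu d v l j ^ 2 * dotR d (gs d v j) (gs d v j))
                  <= sumR l (fun j => 1 / 4 * (h * (/ 2) ^ j))).
  { apply sumR_le. intros j Hj. destruct Hred as [Hsize _].
    specialize (Hsize l j Hj ltac:(lia)).
    assert (gs_mu d v l j ^ 2 <= 1 / 4)
      by (rewrite <- pow2_abs; pose proof (Rabs_pos (gs_mu d v l j)); nra).
    apply Rmult_le_compat; [apply pow2_ge_0 | apply dotR_self_nonneg | assumption | apply Hg; lia]. }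
  assert (Hgeo : sumR l (fun j => (/ 2) ^ j) <= 2).
  { assert (E : forall k, sumR k (fun j => (/ 2) ^ j) = 2 - 2 * (/ 2) ^ k).
    { induction k; cbn [sumR]; [simpl; lra|]. rewrite IHk. simpl. lra. }
    rewrite E. pose proof (pow_le (/ 2) l ltac:(lra)). lra. }
  rewrite !sumR_scal in Htail. change (sumR l (pow (/ 2)) <= 2) in Hgeo.
  pose proof (Hg l Hl). assert ((/ 2) ^ l <= 1)
    by (destruct l; [simpl; lra | apply Rlt_le, pow_lt_1_compat; [lra | lia]]).
  unfold h in *. nra.
Qed.

End LLLBounds.

Lemma last_index_exists (Q : nat -> Prop) n l0 : Q l0 -> (l0 < n)%nat ->
  exists L, (l0 <= L < n)%nat /\ Q L /\ forall l, (L < l < n)%nat -> ~ Q l.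
Proof.
  induction n; intros HQ Hl0; [lia|].
  destruct (classic (Q n)) as [Hn|Hn].
  - exists n. repeat split; auto; lia.
  - destruct (Nat.eq_dec l0 n) as [->|Hne]; [contradiction|].
    destruct (IHn HQ ltac:(lia)) as (L & HL & HQL & Hmax).
    exists L. repeat split; auto; try lia.
    intros l Hl. destruct (Nat.eq_dec l n) as [->|]; auto. apply Hmax; lia.
Qed.

(* Let L be the last index (in LLL order) with a nonzero coefficient: then <w, v*_L> is an integer
   multiple of |v*_L|^2, so |v*_L| <= |w|, and every earlier basis vector is short compared to v*_L. *)
Lemma LLL_basis_coeff_bound m d (b : nat -> nat -> Z) (sigma : nat -> nat) (c w : nat -> Z) k0 :
  (forall k, (k < m)%nat -> (sigma k < m)%nat) ->
  (forall j k, (j < m)%nat -> (k < m)%nat -> sigma j = sigma k -> j = k) ->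
  LLL_reduced m d (fun k => toR (b (sigma k))) ->
  (k0 < m)%nat -> c k0 <> 0%Z ->
  (forall t, (t < d)%nat -> w t = sumZ m (fun k => c k * b k t)%Z) ->
  normZ d (b k0) ^ 2 <= 3 / 2 * 2 ^ (m - 1) * normZ d w ^ 2.
Proof.
  intros Hsig Hinj Hred Hk0 Hck0 Hw.
  set (v := fun k => toR (b (sigma k))) in *.
  assert (Hsurj : bSurjective m sigma) by (apply bInjective_bSurjective; auto).
  destruct (Hsurj k0 Hk0) as (l0 & Hl0 & E0).
  destruct (last_index_exists (fun l => c (sigma l) <> 0%Z) m l0) as (L & HL & HcL & Hmax);
    [rewrite E0; exact Hck0 | exact Hl0 |].
  set (G := gs d v L).
  assert (Hdot : dotR d (toR w) G = IZR (c (sigma L)) * dotR d G G).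
  { rewrite dotR_comm, (dotR_ext d G _ (fun t => sumR m (fun k => IZR (c k) * toR (b k) t))).
    2:{ intros t Ht. unfold toR at 1. rewrite Hw, IZR_sumZ by exact Ht.
        apply sumR_ext; intros; apply mult_IZR. }
    rewrite dotR_sum_r, (sumR_delta m (sigma L)); [| apply Hsig; lia |].
    - unfold G. rewrite dotR_comm. f_equal. apply (dotR_vec_gs_diag d v L).
    - intros k Hk Hne. destruct (Hsurj k Hk) as (l & Hl & <-).
      destruct (Nat.lt_total l L) as [Hlt|[->|Hgt]]; [| contradiction |].
      + unfold G. rewrite dotR_comm. change (toR (b (sigma l))) with (v l).
        rewrite dotR_vec_gs_lt by exact Hlt. ring.
      + replace (c (sigma l)) with 0%Z by (symmetry; apply NNPP, Hmax; lia). ring. }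
  pose proof (gs_sq_le_of_dot_int d v (toR w) L _ HcL Hdot) as HGw.
  pose proof (LLL_vec_sq_bound m d v Hred l0 L ltac:(lia) ltac:(lia)) as Hl0L.
  unfold v in Hl0L at 1 2. rewrite E0, dotR_toR_self in Hl0L.
  rewrite dotR_toR_self in HGw. fold G in Hl0L, HGw.
  assert (2 ^ L <= 2 ^ (m - 1)) by (apply Rle_pow; [lra | lia]).
  pose proof (pow_le 2 L ltac:(lra)). pose proof (dotR_self_nonneg d G). nra.
Qed.

Lemma normZ_sq_split p m x :
  normZ (p + m) x ^ 2 = sumR p (fun t => IZR (x t) ^ 2) + normZ m (pr p x) ^ 2.
Proof. rewrite !normZ_sq, sumR_split. reflexivity. Qed.

Lemma normZ_pr_le p m x : normZ m (pr p x) <= normZ (p + m) x.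
Proof.
  apply Rsqr_incr_0_var; [| apply normZ_nonneg]. rewrite !Rsqr_pow2, normZ_sq_split.
  pose proof (sumR_nonneg p (fun t => IZR (x t) ^ 2) ltac:(intros; apply pow2_ge_0)). lra.
Qed.

Section AugmentedLattice.

Variables (m p : nat) (Pb : nat -> nat -> Z).

Lemma aug_row_low k t : (t < p)%nat -> aug_row p Pb k t = Pb k t.
Proof. intros Ht. unfold aug_row. now rewrite (proj2 (Nat.ltb_lt t p) Ht). Qed.

Lemma aug_row_high k s : aug_row p Pb k (p + s) = if Nat.eqb s k then 1%Z else 0%Z.
Proof.
  unfold aug_row. rewrite (proj2 (Nat.ltb_ge (p + s) p)) by lia.
  now replace (p + s - p)%nat with s by lia.
Qed.

Lemma sumZ_aug_row_high (c : nat -> Z) s : (s < m)%nat ->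
  sumZ m (fun k => c k * aug_row p Pb k (p + s))%Z = c s.
Proof.
  intros Hs. rewrite (sumZ_delta m s) by (try exact Hs; intros k _ Hne;
    rewrite aug_row_high, (proj2 (Nat.eqb_neq s k)) by congruence; lia).
  rewrite aug_row_high, Nat.eqb_refl. lia.
Qed.

Lemma in_R_coord_low x : in_R m p Pb x ->
  forall t, (t < p)%nat -> x t = sumZ m (fun k => pr p x k * Pb k t)%Z.
Proof.
  intros [c Hc] t Ht.
  assert (Hcpr : forall s, (s < m)%nat -> c s = pr p x s)
    by (intros s Hs; unfold pr; rewrite Hc, sumZ_aug_row_high by lia; reflexivity).
  rewrite Hc by lia. apply sumZ_ext. intros k Hk. now rewrite aug_row_low, Hcpr.
Qed.

Definition lift (u : nat -> Z) : nat -> Z :=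
  fun t => if (t <? p)%nat then sumZ m (fun k => u k * Pb k t)%Z else u (t - p)%nat.

Lemma lift_in_R u : in_R m p Pb (lift u).
Proof.
  exists u. intros t Ht. unfold lift. destruct (Nat.ltb_spec t p) as [Htp|Htp].
  - apply sumZ_ext; intros. now rewrite aug_row_low.
  - rewrite <- (sumZ_aug_row_high u (t - p)) by lia.
    apply sumZ_ext; intros. do 3 f_equal. lia.
Qed.

Lemma pr_lift u : pr p (lift u) = u.
Proof.
  apply functional_extensionality; intros s. unfold pr, lift.
  rewrite (proj2 (Nat.ltb_ge (p + s) p)) by lia. f_equal; lia.
Qed.

Variables (P : nat -> nat -> R) (beta : R).

Definition round_err (u : nat -> Z) (t : nat) : R :=
  sumR m (fun k => IZR (u k) * (IZR (Pb k t) - beta * P k t)).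

Lemma IZR_sumZ_Pb u t :
  IZR (sumZ m (fun k => u k * Pb k t)%Z) = beta * vecmat m P u t + round_err u t.
Proof.
  rewrite IZR_sumZ. unfold vecmat, round_err. rewrite <- sumR_scal, <- sumR_add.
  apply sumR_ext; intros. rewrite mult_IZR. ring.
Qed.

Lemma in_R_normZ_sq x : in_R m p Pb x ->
  normZ (p + m) x ^ 2 = sumR p (fun t => (beta * vecmat m P (pr p x) t + round_err (pr p x) t) ^ 2)
                        + normZ m (pr p x) ^ 2.
Proof.
  intros Hx. rewrite normZ_sq_split. f_equal. apply sumR_ext; intros t Ht.
  now rewrite (in_R_coord_low x Hx t Ht), IZR_sumZ_Pb.
Qed.

Hypothesis Hpm : (p <= m)%nat.
Hypothesis Hround : forall k j, (k < m)%nat -> (j < p)%nat ->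
  -(1/2) <= IZR (Pb k j) - beta * P k j <= 1/2.

Lemma round_err_sq_bound u :
  sumR p (fun t => round_err u t ^ 2) <= INR m ^ 2 / 4 * normZ m u ^ 2.
Proof.
  rewrite normZ_sq. set (U := sumR m (fun k => IZR (u k) ^ 2)).
  assert (HU : 0 <= U) by (apply sumR_nonneg; intros; apply pow2_ge_0).
  assert (Hcoord : forall t, (t < p)%nat -> round_err u t ^ 2 <= INR m / 4 * U).
  { intros t Ht. eapply Rle_trans; [apply sumR_cauchy_schwarz|]. cbv beta. fold U.
    assert (sumR m (fun k => (IZR (Pb k t) - beta * P k t) ^ 2) <= sumR m (fun _ => 1 / 4)).
    { apply sumR_le. intros k Hk. specialize (Hround k t Hk Ht). nra. }
    rewrite sumR_const in H. nra. }
  eapply Rle_trans; [apply sumR_le, Hcoord|]. rewrite sumR_const.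
  assert (INR p <= INR m) by (apply le_INR, Hpm). pose proof (pos_INR p).
  assert (INR p * U <= INR m * U) by nra. nra.
Qed.

Lemma lift_Lambda_normZ_sq_le v : Lambda m p P v ->
  normZ (p + m) (lift v) ^ 2 <= (INR m ^ 2 / 4 + 1) * normZ m v ^ 2.
Proof.
  intros Hv. rewrite (in_R_normZ_sq _ (lift_in_R v)), pr_lift.
  rewrite (sumR_ext p _ (fun t => round_err v t ^ 2)) by (intros t Ht; rewrite (Hv t Ht); f_equal; ring).
  pose proof (round_err_sq_bound v). lra.
Qed.

Lemma in_R_vecmat_pr_bound x : (2 <= m)%nat -> in_R m p Pb x ->
  beta ^ 2 * normR p (vecmat m P (pr p x)) ^ 2 <= INR m ^ 2 / 2 * normZ (p + m) x ^ 2.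
Proof.
  intros Hm Hx. rewrite (in_R_normZ_sq x Hx). set (u := pr p x).
  set (X := sumR p (fun t => (beta * vecmat m P u t + round_err u t) ^ 2)).
  assert (HX : 0 <= X) by (apply sumR_nonneg; intros; apply pow2_ge_0).
  (* (a + e - e)^2 <= 2 (a + e)^2 + 2 e^2 *)
  assert (H : beta ^ 2 * normR p (vecmat m P u) ^ 2 <= 2 * X + 2 * sumR p (fun t => round_err u t ^ 2)).
  { unfold X. rewrite normR_sq, <- !sumR_scal, <- sumR_add. apply sumR_le; intros t _.
    pose proof (pow2_ge_0 (beta * vecmat m P u t + 2 * round_err u t)). nra. }
  pose proof (round_err_sq_bound u).
  assert (HM : 4 <= INR m ^ 2)
    by (assert (2 <= INR m) by (replace 2 with (INR 2) by reflexivity; apply le_INR, Hm); nra).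
  pose proof (pow2_ge_0 (normZ m u)).
  assert (2 * X <= INR m ^ 2 / 2 * X) by nra. nra.
Qed.

End AugmentedLattice.

Definition Zrange (N : nat) : list Z :=
  map (fun k => Z.of_nat k - Z.of_nat N)%Z (seq 0 (2 * N + 1)).

Fixpoint Zbox (N n : nat) : list (list Z) :=
  match n with
  | O => nil :: nil
  | S n' => flat_map (fun z => map (cons z) (Zbox N n')) (Zrange N)
  end.

Lemma in_Zrange N z : (Z.abs z <= Z.of_nat N)%Z -> In z (Zrange N).
Proof.
  intros Hz. apply in_map_iff. exists (Z.to_nat (z + Z.of_nat N)).
  split; [lia | apply in_seq; lia].
Qed.

Lemma in_Zbox N n (u : nat -> Z) : (forall t, (t < n)%nat -> (Z.abs (u t) <= Z.of_nat N)%Z) ->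
  In (map u (seq 0 n)) (Zbox N n).
Proof.
  revert u. induction n; intros u Hu; [left; reflexivity|].
  simpl. rewrite <- seq_shift, map_map. apply in_flat_map. exists (u 0%nat).
  split; [apply in_Zrange, Hu; lia|].
  apply in_map, (IHn (fun t => u (S t))). intros; apply Hu; lia.
Qed.

Definition vec_of_list (l : list Z) : nat -> Z := fun t => nth t l 0%Z.

Lemma vec_of_list_map (u : nat -> Z) n t : (t < n)%nat -> vec_of_list (map u (seq 0 n)) t = u t.
Proof.
  intros Ht. unfold vec_of_list.
  rewrite (nth_indep _ _ (u 0%nat)) by (rewrite length_map, length_seq; exact Ht).
  now rewrite map_nth, seq_nth.
Qed.

Lemma list_argmin {A} (l : list A) (Q : A -> Prop) (f : A -> R) : (exists x, In x l /\ Q x) ->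
  exists x0, In x0 l /\ Q x0 /\ forall x, In x l -> Q x -> f x0 <= f x.
Proof.
  induction l as [|a l IH]; intros (x & Hx & HQx); [destruct Hx|].
  destruct (classic (exists y, In y l /\ Q y)) as [Hy|Hy].
  - destruct (IH Hy) as (x0 & Hx0 & HQx0 & Hmin).
    destruct (classic (Q a /\ f a < f x0)) as [Ha|Ha].
    + exists a. split; [left; reflexivity|]. split; [tauto|].
      intros y [<-|Hyl] HQy; [lra|]. pose proof (Hmin y Hyl HQy). lra.
    + exists x0. split; [right; exact Hx0|]. split; [exact HQx0|].
      intros y [<-|Hyl] HQy; [|auto]. apply Rnot_lt_le. intro; apply Ha; auto.
  - exists a. destruct Hx as [<-|Hxl]; [|exfalso; eauto].
    split; [left; reflexivity|]. split; [exact HQx|].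
    intros y [<-|Hyl] HQy; [lra | exfalso; eauto].
Qed.

Lemma Zvec_argmin n N (Q : (nat -> Z) -> Prop) (f : (nat -> Z) -> R) :
  (forall u u', (forall t, (t < n)%nat -> u t = u' t) -> Q u -> Q u' /\ f u' = f u) ->
  (forall u, Q u -> forall t, (t < n)%nat -> (Z.abs (u t) <= Z.of_nat N)%Z) ->
  (exists u, Q u) -> exists u0, Q u0 /\ forall u, Q u -> f u0 <= f u.
Proof.
  intros Hext Hbound [u Hu].
  assert (Hlist : forall u, Q u -> In (map u (seq 0 n)) (Zbox N n) /\
                    Q (vec_of_list (map u (seq 0 n))) /\ f (vec_of_list (map u (seq 0 n))) = f u).
  { intros u' Hu'. split; [now apply in_Zbox, Hbound|].
    apply (Hext u'); [|exact Hu']. intros; symmetry; now apply vec_of_list_map. }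
  destruct (list_argmin (Zbox N n) (fun l => Q (vec_of_list l)) (fun l => f (vec_of_list l)))
    as (l0 & _ & HQ0 & Hmin).
  { exists (map u (seq 0 n)). now split; apply Hlist. }
  exists (vec_of_list l0). split; [exact HQ0|].
  intros u' Hu'. destruct (Hlist u' Hu') as (Hin & HQ' & Hf). rewrite <- Hf. now apply Hmin.
Qed.

Lemma eps_spec m p P B :
  match eps m p P B with
  | None => forall e, ~ eps_set m p P B e
  | Some x => eps_set m p P B x /\ forall e, eps_set m p P B e -> x <= e
  end.
Proof.
  unfold eps. apply epsilon_spec.
  destruct (classic (exists e, eps_set m p P B e)) as [(e & u & Hu)|Hnone].
  2:{ exists None. intros e He; apply Hnone; eauto. }
  set (Q := fun u => normZ m u <= B /\ exists j, (j < p)%nat /\ vecmat m P u j <> 0).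
  destruct (Zvec_argmin m (Z.to_nat (up B)) Q (fun u => normR p (vecmat m P u)))
    as (u0 & (HQ0 & Hj0) & Hmin).
  - intros u1 u2 H12 [Hn Hj].
    assert (Hv : vecmat m P u2 = vecmat m P u1).
    { apply functional_extensionality; intros j. apply sumR_ext; intros; now rewrite H12. }
    unfold Q. rewrite Hv, (normZ_ext m u2 u1) by (intros; symmetry; auto). auto.
  - intros u1 [Hn _] t Ht. pose proof (Rabs_coord_le_normZ m u1 t Ht) as Hc.
    rewrite Rabs_Zabs in Hc. destruct (archimed B) as [HB _].
    assert (IZR (Z.abs (u1 t)) < IZR (up B)) by lra. apply lt_IZR in H. lia.
  - exists u. destruct Hu as (Hn & Hj & _). split; auto.
  - exists (Some (normR p (vecmat m P u0))). split.
    + exists u0. auto.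
    + intros e' (u' & Hn' & Hj' & ->). apply Hmin. split; auto.
Qed.

Lemma eps_le m p P B e : eps_set m p P B e ->
  exists e0, eps m p P B = Some e0 /\ 0 < e0 /\ e0 <= e.
Proof.
  intros He. pose proof (eps_spec m p P B) as Hspec.
  destruct (eps m p P B) as [e0|]; [|exfalso; exact (Hspec e He)].
  destruct Hspec as [(u & _ & Hj & ->) Hmin].
  exists (normR p (vecmat m P u)). split; [reflexivity|]. split; [now apply normR_pos | auto].
Qed.

Lemma phi_spec m p P s :
  match phi m p P s with
  | None => ~ bound (fun B => B = 0 \/ phi_set m p P s B)
  | Some x => is_lub (fun B => B = 0 \/ phi_set m p P s B) x
  end.
Proof.
  unfold phi. apply epsilon_spec.
  destruct (classic (bound (fun B => B = 0 \/ phi_set m p P s B))) as [Hb|Hb].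
  - destruct (completeness _ Hb) as [x Hx]; [exists 0; left; reflexivity|]. now exists (Some x).
  - now exists None.
Qed.

Lemma phi_le m p P s Bi : 0 <= Bi -> (forall B, phi_set m p P s B -> B <= Bi) ->
  match phi m p P s with Some x => x <= Bi | None => False end.
Proof.
  intros HBi Hle. pose proof (phi_spec m p P s) as Hspec.
  assert (Hub : is_upper_bound (fun B => B = 0 \/ phi_set m p P s B) Bi)
    by (intros B [->|HB]; auto).
  destruct (phi m p P s) as [x|].
  - now apply Hspec.
  - apply Hspec. now exists Bi.
Qed.

Lemma normZ_sorted_le d m (b : nat -> nat -> Z) :
  (forall k, (S k < m)%nat -> normZ d (b k) <= normZ d (b (S k))) ->
  forall j k, (j <= k)%nat -> (k < m)%nat -> normZ d (b j) <= normZ d (b k).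
Proof.
  intros Hsort j k. induction k; intros Hj Hk; [replace j with 0%nat by lia; lra|].
  destruct (Nat.eq_dec j (S k)) as [->|Hne]; [lra|].
  eapply Rle_trans; [apply IHk; lia | apply Hsort; lia].
Qed.

Lemma Zbasis_normZ_pos n d b L : is_Zbasis n d b L -> forall k, (k < n)%nat -> 0 < normZ d (b k).
Proof.
  intros (_ & Hindep & _) k Hk. apply normR_pos. apply NNPP; intros Hzero.
  set (e := fun j => if Nat.eqb j k then 1%Z else 0%Z).
  assert (He : forall j, (j < n)%nat -> j <> k -> e j = 0%Z)
    by (intros j _ Hj; unfold e; now rewrite (proj2 (Nat.eqb_neq j k))).
  enough (e k = 0%Z) by (unfold e in H; rewrite Nat.eqb_refl in H; discriminate).
  apply Hindep; [|exact Hk]. intros t Ht.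
  rewrite (sumZ_delta n k) by (try exact Hk; intros j Hj Hne; rewrite He; auto).
  unfold e. rewrite Nat.eqb_refl, Z.mul_1_l. apply eq_IZR, NNPP. intro Hne. apply Hzero; eauto.
Qed.

Lemma kappa_sq m : (1 <= m)%nat -> kappa m ^ 2 = / (INR m ^ 2 * 2 ^ S m).
Proof.
  intros Hm. unfold kappa. assert (0 < INR m) by (apply lt_0_INR; lia).
  assert (E : Rpower 2 (- (INR m + 1) / 2) ^ 2 = / 2 ^ S m).
  { simpl. rewrite Rmult_1_r, <- Rpower_plus.
    replace (- (INR m + 1) / 2 + - (INR m + 1) / 2) with (- INR (S m)) by (rewrite S_INR; field).
    rewrite Rpower_Ropp, Rpower_pow by lra. reflexivity. }
  rewrite Rpow_mult_distr, E, pow_inv, Rinv_mult. reflexivity.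
Qed.

Lemma LLL_kappa_factor_lt_1 m : (2 <= m)%nat ->
  3 / 2 * 2 ^ (m - 1) * (INR m ^ 2 / 4 + 1) * kappa m ^ 2 < 1.
Proof.
  intros Hm. rewrite kappa_sq by lia. destruct m as [|m']; [lia|].
  replace (S m' - 1)%nat with m' by lia.
  assert (H2 : 2 <= INR (S m')) by (replace 2 with (INR 2) by reflexivity; apply le_INR; lia).
  assert (HM : 4 <= INR (S m') ^ 2) by nra.
  pose proof (pow_lt 2 m' ltac:(lra)) as HT.
  replace (2 ^ S (S m')) with (4 * 2 ^ m') by (simpl; ring).
  replace (3 / 2 * 2 ^ m' * (INR (S m') ^ 2 / 4 + 1) * / (INR (S m') ^ 2 * (4 * 2 ^ m')))
    with (3 / 32 + 3 / 8 * / INR (S m') ^ 2) by (field; lra).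
  assert (/ INR (S m') ^ 2 <= / 4) by (apply Rinv_le_contravar; lra). lra.
Qed.

Definition Zspan (n d : nat) (v : nat -> nat -> Z) (x : nat -> Z) : Prop :=
  exists c : nat -> Z, forall t, (t < d)%nat -> x t = sumZ n (fun k => (c k * v k t)%Z).

Lemma Zspan_combination n d v N (w : nat -> nat -> Z) (a : nat -> Z) x :
  (forall k, (k < N)%nat -> Zspan n d v (w k)) ->
  (forall t, (t < d)%nat -> x t = sumZ N (fun k => (a k * w k t)%Z)) -> Zspan n d v x.
Proof.
  intros Hw Hx.
  enough (Zspan n d v (fun t => sumZ N (fun k => (a k * w k t)%Z))) as [c Hc]
    by (exists c; intros t Ht; rewrite Hx by exact Ht; exact (Hc t Ht)).
  clear Hx. induction N as [|N IH].
  - exists (fun _ => 0%Z). intros t _. symmetry. now apply sumZ_eq0.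
  - destruct IH as [c1 H1]; [intros; apply Hw; lia|]. destruct (Hw N ltac:(lia)) as [c2 H2].
    exists (fun j => c1 j + a N * c2 j)%Z. intros t Ht. cbn [sumZ]. rewrite H1, H2 by exact Ht.
    rewrite (sumZ_ext n (fun j => (c1 j + a N * c2 j) * v j t)%Z
               (fun j => c1 j * v j t + a N * (c2 j * v j t))%Z) by (intros; ring).
    rewrite sumZ_add, sumZ_scal. reflexivity.
Qed.

Lemma pr_Zindependent m p Pb (b : nat -> nat -> Z) i :
  is_Zbasis m (p + m) b (in_R m p Pb) -> (i <= m)%nat -> forall c : nat -> Z,
  (forall t, (t < m)%nat -> sumZ i (fun k => c k * pr p (b k) t)%Z = 0%Z) ->
  forall k, (k < i)%nat -> c k = 0%Z.
Proof.
  intros (Hin & Hindep & _) Him c Hc k Hk.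
  set (c' := fun k => if (k <? i)%nat then c k else 0%Z).
  assert (Hc'pr : forall s, (s < m)%nat -> sumZ m (fun k => c' k * pr p (b k) s)%Z = 0%Z).
  { intros s Hs. rewrite <- (Hc s Hs), (sumZ_trunc m i) by (try exact Him; intros t Ht;
      unfold c'; rewrite (proj2 (Nat.ltb_ge t i)) by lia; lia).
    apply sumZ_ext; intros t Ht. unfold c'. now rewrite (proj2 (Nat.ltb_lt t i)) by exact Ht. }
  enough (c' k = 0%Z) by (unfold c' in H; now rewrite (proj2 (Nat.ltb_lt k i)) in H).
  apply Hindep; [|lia]. intros t Ht. destruct (Nat.lt_ge_cases t p) as [Htp|Htp].
  - rewrite (sumZ_ext m _ (fun k => sumZ m (fun s => Pb s t * (c' k * pr p (b k) s))%Z)).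
    + rewrite sumZ_swap. apply sumZ_eq0. intros s Hs. now rewrite sumZ_scal, Hc'pr, Z.mul_0_r.
    + intros j Hj. rewrite (in_R_coord_low m p Pb (b j) (Hin j Hj) t Htp), <- sumZ_scal.
      apply sumZ_ext; intros; ring.
  - replace t with (p + (t - p))%nat by lia. apply Hc'pr. lia.
Qed.

Section Proposition.

Variables (m p : nat) (P : nat -> nat -> R) (beta : R) (Pb : nat -> nat -> Z) (b : nat -> nat -> Z).
Hypothesis Hm : (2 <= m)%nat.
Hypothesis Hpm : (p <= m)%nat.
Hypothesis Hround : forall k j, (k < m)%nat -> (j < p)%nat ->
  -(1/2) <= IZR (Pb k j) - beta * P k j <= 1/2.
Hypothesis Hbasis : is_Zbasis m (p + m) b (in_R m p Pb).

Lemma pr_in_Lambda x B : 0 < beta -> in_R m p Pb x -> normZ (p + m) x < B ->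
  phi_set m p P beta B -> Lambda m p P (pr p x).
Proof.
  intros Hbeta Hx HxB [HB Hphi]. set (u := pr p x).
  apply NNPP; intros Hnot.
  assert (Hj : exists j, (j < p)%nat /\ vecmat m P u j <> 0).
  { apply NNPP; intros Hn. apply Hnot. intros j Hj. apply NNPP; intros Hne. apply Hn; eauto. }
  assert (Hu : eps_set m p P B (normR p (vecmat m P u))).
  { exists u. repeat split; auto. pose proof (normZ_pr_le p m x). fold u in H. lra. }
  destruct (eps_le _ _ _ _ _ Hu) as (e & He & He0 & Hle). rewrite He in Hphi.
  assert (HmB : INR m * B <= beta * normR p (vecmat m P u)).
  { apply (Rmult_le_compat_r e) in Hphi; [|lra].
    unfold Rdiv in Hphi. rewrite Rmult_assoc, Rinv_l, Rmult_1_r in Hphi by lra.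
    eapply Rle_trans; [exact Hphi|]. apply Rmult_le_compat_l; lra. }
  assert (HM : 2 <= INR m) by (replace 2 with (INR 2) by reflexivity; apply le_INR, Hm).
  assert (HmB2 : (INR m * B) ^ 2 <= (beta * normR p (vecmat m P u)) ^ 2)
    by (apply pow_incr; split; [nra | exact HmB]).
  pose proof (in_R_vecmat_pr_bound m p Pb P beta Hpm Hround x Hm Hx) as Hbound. fold u in Hbound.
  pose proof (normZ_nonneg (p + m) x).
  assert (normZ (p + m) x ^ 2 < B ^ 2) by nra.
  assert (INR m ^ 2 * normZ (p + m) x ^ 2 < INR m ^ 2 * B ^ 2) by (apply Rmult_lt_compat_l; nra).
  assert (0 <= INR m ^ 2 * normZ (p + m) x ^ 2) by (apply Rmult_le_pos; apply pow2_ge_0).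
  rewrite !Rpow_mult_distr in HmB2. lra.
Qed.

Lemma short_Lambda_in_Zspan i v :
  (exists sigma : nat -> nat,
     (forall k, (k < m)%nat -> (sigma k < m)%nat) /\
     (forall j k, (j < m)%nat -> (k < m)%nat -> sigma j = sigma k -> j = k) /\
     LLL_reduced m (p + m) (fun k => toR (b (sigma k)))) ->
  (forall k, (S k < m)%nat -> normZ (p + m) (b k) <= normZ (p + m) (b (S k))) ->
  (i < m)%nat -> Lambda m p P v -> normZ m v <= kappa m * normZ (p + m) (b i) ->
  Zspan i m (fun k => pr p (b k)) v.
Proof.
  intros (sigma & Hsig & Hinj & Hred) Hsort Hi Hv Hvnorm.
  pose proof Hbasis as (_ & _ & Hspan).
  destruct (Hspan (lift m p Pb v) (lift_in_R m p Pb v)) as [c Hc].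
  destruct (classic (exists k0, (i <= k0 < m)%nat /\ c k0 <> 0%Z)) as [(k0 & Hk0 & Hck0)|Hnone].
  2:{ exists c. intros t Ht. transitivity (pr p (lift m p Pb v) t); [now rewrite pr_lift|]. unfold pr.
      rewrite Hc by lia. apply sumZ_trunc; [lia|]. intros k Hk.
      replace (c k) with 0%Z by (symmetry; apply NNPP; intro; apply Hnone; eauto). lia. }
  exfalso.
  pose proof (LLL_basis_coeff_bound m (p + m) b sigma c _ k0 Hsig Hinj Hred ltac:(lia) Hck0 Hc) as Hk0b.
  pose proof (lift_Lambda_normZ_sq_le m p Pb P beta Hpm Hround v Hv) as Hlift.
  pose proof (Zbasis_normZ_pos _ _ _ _ Hbasis i Hi) as Hpos.
  pose proof (normZ_sorted_le (p + m) m b Hsort i k0 ltac:(lia) ltac:(lia)) as Hik0.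
  assert (Hv2 : normZ m v ^ 2 <= kappa m ^ 2 * normZ (p + m) (b i) ^ 2)
    by (rewrite <- Rpow_mult_distr; apply pow_incr; split; [apply normZ_nonneg | exact Hvnorm]).
  pose proof (LLL_kappa_factor_lt_1 m Hm) as Hfactor.
  set (A := 3 / 2 * 2 ^ (m - 1)) in *. set (F := INR m ^ 2 / 4 + 1) in *.
  assert (HA : 0 < A) by (unfold A; pose proof (pow_lt 2 (m - 1) ltac:(lra)); lra).
  assert (HF : 0 < F) by (unfold F; pose proof (pow2_ge_0 (INR m)); lra).
  assert (normZ (p + m) (b i) ^ 2 <= normZ (p + m) (b k0) ^ 2) by (apply pow_incr; lra).
  assert (A * normZ (p + m) (lift m p Pb v) ^ 2 <= A * F * normZ m v ^ 2)
    by (rewrite Rmult_assoc; apply Rmult_le_compat_l; lra).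
  assert (A * F * normZ m v ^ 2 <= A * F * kappa m ^ 2 * normZ (p + m) (b i) ^ 2)
    by (rewrite (Rmult_assoc (A * F)); apply Rmult_le_compat_l; nra).
  assert (A * F * kappa m ^ 2 * normZ (p + m) (b i) ^ 2 < normZ (p + m) (b i) ^ 2)
    by (rewrite <- (Rmult_1_l (normZ (p + m) (b i) ^ 2)) at 2; apply Rmult_lt_compat_r;
        [apply pow_lt|]; lra).
  lra.
Qed.

End Proposition.

Theorem proposition4p1
  (m p : nat) (P : nat -> nat -> R) (beta : R)
  (Pb : nat -> nat -> Z) (b : nat -> nat -> Z) (i : nat) :
  (2 <= m)%nat -> (1 <= p)%nat -> (p <= m)%nat ->
  0 < beta ->
  (forall k j, (k < m)%nat -> (j < p)%nat ->
     -(1/2) <= IZR (Pb k j) - beta * P k j <= 1/2) ->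
  is_Zbasis m (p + m) b (in_R m p Pb) ->
  (exists sigma : nat -> nat,
     (forall k, (k < m)%nat -> (sigma k < m)%nat) /\
     (forall j k, (j < m)%nat -> (k < m)%nat -> sigma j = sigma k -> j = k) /\
     LLL_reduced m (p + m) (fun k => toR (b (sigma k)))) ->
  (forall k, (S k < m)%nat -> normZ (p + m) (b k) <= normZ (p + m) (b (S k))) ->
  (i < m)%nat ->
  let B := fun l : nat => match l with O => 0 | S k => normZ (p + m) (b k) end in
  B i <= kappa m * B (S i) ->
  is_Zbasis i m (fun k => pr p (b k)) (Lambda m p P)
  \/ ~ generated_by_norm_le m (Lambda m p P) (kappa m * B (S i))
  \/ (match phi m p P beta with Some x => x <= B i | None => False end).
Proof.
  intros Hm _ Hpm Hbeta Hround Hbasis Hsigma Hsort Hi B _.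
  change (B (S i)) with (normZ (p + m) (b i)).
  assert (HBi : forall k, (k < i)%nat -> normZ (p + m) (b k) <= B i)
    by (intros k Hk; destruct i as [|i']; [lia | apply (normZ_sorted_le _ m b Hsort); lia]).
  destruct (classic (exists B', phi_set m p P beta B' /\ B i < B')) as [(B' & HB' & HiB')|Hnone].
  - destruct (classic (generated_by_norm_le m (Lambda m p P) (kappa m * normZ (p + m) (b i))))
      as [Hgen|Hgen]; [left | right; left; exact Hgen].
    split; [|split].
    + intros k Hk. apply (pr_in_Lambda m p P beta Pb Hm Hpm Hround _ B'); auto.
      * apply Hbasis; lia.
      * pose proof (HBi k Hk). lra.
    + apply (pr_Zindependent m p Pb b i Hbasis). lia.
    + intros x Hx. destruct (Hgen x Hx) as (n & w & a & Hw & Hxw).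
      apply (Zspan_combination i m _ n w a x); [|exact Hxw].
      intros k Hk. destruct (Hw k Hk) as [HwL Hwnorm].
      now apply (short_Lambda_in_Zspan m p P beta Pb b Hm Hpm Hround Hbasis).
  - right; right. apply phi_le.
    + destruct i; [apply Rle_refl | apply normZ_nonneg].
    + intros B' HB'. apply Rnot_lt_le. intros HlB'. apply Hnone. eauto.
Qed.
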